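(* Let $G$ be a connected, regular, uniformly dense finite simple graph. Then either $G$ has a perfect matching, or $G\setminus v$ has a perfect matching for every vertex $v\in V(G)$.
   Context: For $A\subseteq E$, $c(A)$ is the number of components of $(V,A)$, $\operatorname{rank}(A)=|V|-c(A)$, $\rho(A)=|A|/\operatorname{rank}(A)$; $G$ is uniformly dense if $\rho(A)\le\rho(E)$ for all nonempty $A\subseteq E$. A perfect matching is a set of edges covering every vertex exactly once; $G\setminus v$ is $G$ with vertex $v$ and its incident edges removed. *)

From mathcomp Require Import all_boot all_order all_algebra.
Set Implicit Arguments. Unset Strict Implicit. Unset Printing Implicit Defensive.
Import Order.TTheory GRing.Theory Num.Theory.

(* A finite simple graph on vertex type T is given by its edge set
   E : {set {set T}}, every edge being a 2-element subset of T. *)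
Definition simple_graph (T : finType) (E : {set {set T}}) : Prop :=
  forall e, e \in E -> #|e| = 2.

Definition adj (T : finType) (A : {set {set T}}) : rel T :=
  fun x y => [set x; y] \in A.

Definition ncomp (T : finType) (A : {set {set T}}) : nat :=
  n_comp (adj A) T.

Definition grank (T : finType) (A : {set {set T}}) : nat :=
  #|T| - ncomp A.

Definition rho (T : finType) (A : {set {set T}}) : rat :=
  (#|A|%:R / (grank A)%:R)%R.

Definition uniformly_dense (T : finType) (E : {set {set T}}) : Prop :=
  forall A : {set {set T}}, A \subset E -> A != set0 -> (rho A <= rho E)%R.

Definition connected_graph (T : finType) (E : {set {set T}}) : Prop :=
  forall x y : T, connect (adj E) x y.

Definition deg (T : finType) (E : {set {set T}}) (v : T) : nat :=
  #|[set e in E | v \in e]|.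

Definition regular (T : finType) (E : {set {set T}}) : Prop :=
  exists k, forall v : T, deg E v = k.

Definition perfect_matching (T : finType) (V : {set T}) (E M : {set {set T}}) : Prop :=
  M \subset E /\ forall x, x \in V -> #|[set e in M | x \in e]| = 1.

Definition del_vertex_edges (T : finType) (E : {set {set T}}) (v : T) : {set {set T}} :=
  [set e in E | v \notin e].

From mathcomp Require Import all_boot all_order all_algebra.
From mathcomp Require Import zify.
Set Implicit Arguments. Unset Strict Implicit. Unset Printing Implicit Defensive.
Import GRing.Theory Num.Theory.

(* Tutte's theorem along Lovász's lines, plus a component count coming from uniform
   density.  Let V be T, or T minus one vertex, so that |V| is even.  By the alternating
   cycle exchange of Lovász, V is matchable in G[V] as soon as it is matchable in every
   supergraph F in which the vertices of V that are not universal (adjacent to all of V)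
   span a disjoint union of cliques P.  Let U be the universal vertices and S the
   complement of V \ U.  The edges of G avoiding S form a subgraph A with at least
   |P| + |S| components.  Uniform density, |A| / (n - c(A)) <= |E| / (n - 1), together
   with 2|E| = kn and |E| - |A| <= k|S| forces c(A) <= 2|S| when S is nonempty, hence
   |P| <= |S| <= |U| + 1.  Since |V| is even, the number of odd cliques has the parity of
   |U|, so it is at most |U|: matching each odd clique with its own universal vertex and
   pairing off everything else inside cliques gives a perfect matching of F. *)

Section Matchings.
Variable T : finType.
Implicit Types (V X K : {set T}) (F : {set {set T}}) (m : T -> T).

(* Perfect matchings are fixed-point-free involutions.  [matches] also asks m to fix every
   vertex outside V, so that m is a bijection of T and [m1 \o m2] can be iterated;
   [pairs_off] only constrains m on K. *)
Definition perfect_involution V m : Prop :=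
  [/\ forall v, v \notin V -> m v = v, {in V, forall v, m v != v} & involutive m].

Definition matches V F m : Prop :=
  perfect_involution V m /\ {in V, forall v, [set v; m v] \in F}.

Definition matchable V F : Prop := exists m, matches V F m.

Definition pairs_off K F m : Prop :=
  {in K, forall v, [/\ m v \in K, m v != v, m (m v) = v & [set v; m v] \in F]}.

Lemma perfect_involution_in V m v : perfect_involution V m -> v \in V -> m v \in V.
Proof.
case=> fixV _ mK vV; apply: contraTT vV => mvV.
by rewrite -(mK v) fixV // (fixV _ mvV).
Qed.

Lemma matchable_pairs_off K F m : pairs_off K F m -> matchable K F.
Proof.
move=> mK; exists (fun v => if v \in K then m v else v); split; first split.
- by move=> v /negbTE ->.
- by move=> v vK; rewrite vK; case: (mK v vK).
- move=> v; case: (boolP (v \in K)) => vK; last by rewrite !(negbTE vK).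
  by case: (mK v vK) => mvK _ mmv _; rewrite mvK mmv.
- by move=> v vK; rewrite vK; case: (mK v vK).
Qed.

Lemma matches_pairs_off V F m : matches V F m -> pairs_off V F m.
Proof.
case=> mV mF v vV; split; [exact: perfect_involution_in mV vV | | |exact: mF].
- by case: mV => _ ->.
- by case: mV => _ _ ->.
Qed.

Lemma matchable0 F : matchable set0 F.
Proof. by apply: (@matchable_pairs_off _ _ id) => v; rewrite inE. Qed.

Lemma matchable_pair F a b : a != b -> [set a; b] \in F -> matchable [set a; b] F.
Proof.
move=> ab abF; pose m v := if v == a then b else a.
have ba : (b == a) = false by rewrite eq_sym (negbTE ab).
apply: (@matchable_pairs_off _ _ m) => v; rewrite /m in_set2.
case/orP=> /eqP ->; first by rewrite eqxx ba set22 abF.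
by rewrite ba eqxx set21 ab setUC abF.
Qed.

Lemma matchable_union X1 X2 F :
  [disjoint X1 & X2] -> matchable X1 F -> matchable X2 F -> matchable (X1 :|: X2) F.
Proof.
move=> dis [m1 /matches_pairs_off h1] [m2 /matches_pairs_off h2].
apply: (@matchable_pairs_off _ _ (fun v => if v \in X1 then m1 v else m2 v)) => v.
rewrite inE; case: ifP => [vX1 _ | _ vX2].
  by case: (h1 v vX1) => m1v ? ? ?; rewrite m1v inE m1v.
case: (h2 v vX2) => m2v ? ? ?; rewrite (disjointFl dis m2v).
by rewrite inE m2v orbT.
Qed.

Lemma matchable_split V K F :
  K \subset V -> matchable K F -> matchable (V :\: K) F -> matchable V F.
Proof.
move=> KV mK mVK; rewrite -(setID V K) (setIidPr KV); apply: matchable_union mK mVK.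
by rewrite disjoints_subset; apply/subsetP => v vK; rewrite !inE vK.
Qed.

Definition clique F X : Prop := {in X &, forall a b, a != b -> [set a; b] \in F}.

Lemma matchable_clique F X : clique F X -> ~~ odd #|X| -> matchable X F.
Proof.
have [n] := ubnP #|X|; elim: n X => // n IH X ltXn cX evX.
have [->|[a aX]] := set_0Vmem X; first exact: matchable0.
have [b] : exists b, b \in X :\ a.
  apply/set0Pn; rewrite -card_gt0; move: evX; rewrite (cardsD1 a X) aX.
  by case: #|X :\ a|.
rewrite !inE => /andP[ba bX].
have abX : [set a; b] \subset X by apply/subsetP => v; rewrite !inE => /orP[] /eqP ->.
have cardX : #|X| = #|X :\: [set a; b]| + 2.
  by have := subset_leq_card abX; rewrite cardsD (setIidPr abX) cards2 eq_sym ba; lia.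
apply: matchable_split abX _ _.
  by apply: matchable_pair; rewrite 1?eq_sym //; apply: cX; rewrite 1?eq_sym.
apply: IH; first lia.
- by move=> u v /setDP[uX _] /setDP[vX _]; apply: cX.
- by move: evX; rewrite cardX oddD addbF.
Qed.

Lemma matchable_perfect_matching V F : matchable V F -> exists M, perfect_matching V F M.
Proof.
case=> m [[_ _ mK] mF]; exists [set [set v; m v] | v in V]; split.
  by apply/subsetP => e /imsetP[v vV ->]; apply: mF.
move=> x xV; apply/eqP/cards1P; exists [set x; m x]; apply/setP => e; rewrite !inE.
apply/andP/eqP => [[/imsetP[v vV ->] /set2P[] ->] //|->].
  by rewrite mK setUC.
by split; [apply/imsetP; exists x | rewrite set21].
Qed.
End Matchings.

Section AlternatingWalk.
Variables (T : finType) (V : {set T}) (m1 m2 : T -> T) (y : T).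
Hypotheses (m1V : perfect_involution V m1) (m2V : perfect_involution V m2) (yV : y \in V).

Let m1K : involutive m1. Proof. by case: m1V. Qed.
Let m2K : involutive m2. Proof. by case: m2V. Qed.

(* [alt_walk] visits every other vertex of the m1/m2-alternating cycle through y;
   [alt_set n] is the stretch a 0, m2 (a 0), ..., a n.-1, m2 (a n.-1) of that cycle. *)
Definition alt_walk i := iter i (m1 \o m2) y.
Local Notation a := alt_walk.

Lemma alt_walkS i : a i.+1 = m1 (m2 (a i)).
Proof. by rewrite /alt_walk iterS. Qed.

Lemma m1_alt_walkS i : m1 (a i.+1) = m2 (a i).
Proof. by rewrite alt_walkS m1K. Qed.

Lemma alt_walk_in i : a i \in V.
Proof.
elim: i => [//|i IH]; rewrite alt_walkS.
exact/(perfect_involution_in m1V)/(perfect_involution_in m2V).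
Qed.

Lemma alt_walk_shift s t d : a s = m2 (a (t + d)) -> a (s + d) = m2 (a t).
Proof.
elim: d s => [|d IH] s; first by rewrite !addn0.
rewrite addnS -addSnnS => e; apply: IH.
by rewrite alt_walkS e m2K m1_alt_walkS.
Qed.

(* The cycle is bipartite: an equality a s = m2 (a t) shifts to the diagonal, where it
   contradicts fixed-point-freeness of m2 or of m1. *)
Lemma alt_walk_neq s t : a s != m2 (a t).
Proof.
wlog st : s t / s <= t.
  move=> H; case: (leqP s t) => [|/ltnW ts]; first exact: H.
  by rewrite -(inj_eq (can_inj m2K)) m2K eq_sym H.
have [k [b ->]] : exists k (b : bool), t = s + k + b + k.
  exists (t - s)./2, (odd (t - s)); have := odd_double_half (t - s).
  rewrite -addnn; lia.
apply/eqP => /(@alt_walk_shift s (s + k + b) k); case: b; rewrite ?addn0 ?addn1.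
  move/(congr1 m2); rewrite m2K alt_walkS => /esym/eqP.
  by apply/negP; case: m1V => _ -> //; apply: (perfect_involution_in m2V); apply: alt_walk_in.
by move/esym/eqP; apply/negP; case: m2V => _ -> //; apply: alt_walk_in.
Qed.

Definition alt_period := order (m1 \o m2) y.
Local Notation p := alt_period.

Let step_inj : injective (m1 \o m2).
Proof. by apply: (@can_inj _ _ _ (m2 \o m1)) => v /=; rewrite m1K m2K. Qed.

Lemma alt_walk_period : a p = y.
Proof. exact: iter_order step_inj y. Qed.

Lemma alt_walk_neq_start j : 0 < j < p -> a j != y.
Proof.
case/andP=> j0 jp; apply: contraTneq j0 => ajy.
by rewrite -(findex_iter jp) -/(a j) ajy findex0.
Qed.

Definition alt_set n := [set v | [exists j : 'I_n, (v == a j) || (v == m2 (a j))]].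

Lemma alt_setP n v :
  reflect (exists2 j, j < n & v = a j \/ v = m2 (a j)) (v \in alt_set n).
Proof.
rewrite inE; apply: (iffP existsP) => [[j /orP[] /eqP]|[j jn vj]].
- by exists j => //; left.
- by exists j => //; right.
by exists (Ordinal jn); case: vj => ->; rewrite eqxx ?orbT.
Qed.

Lemma alt_set_walk n j : j < n -> a j \in alt_set n.
Proof. by move=> jn; apply/alt_setP; exists j; [|left]. Qed.

Lemma alt_set_m2walk n j : j < n -> m2 (a j) \in alt_set n.
Proof. by move=> jn; apply/alt_setP; exists j; [|right]. Qed.

Lemma alt_set_sub n : alt_set n \subset V.
Proof.
apply/subsetP => v /alt_setP[j _ [] ->]; first exact: alt_walk_in.
exact/(perfect_involution_in m2V)/alt_walk_in.
Qed.

Lemma alt_set_m2 n v : v \in alt_set n -> m2 v \in alt_set n.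
Proof.
by case/alt_setP=> j jn [] ->; rewrite ?m2K; [apply: alt_set_m2walk | apply: alt_set_walk].
Qed.

Lemma alt_cycle_m1 v : v \in alt_set p -> m1 v \in alt_set p.
Proof.
have p0 : 0 < p := order_gt0 _ _.
case/alt_setP=> j jp [] ->.
  case: j jp => [|j] jp; last by rewrite m1_alt_walkS alt_set_m2walk // ltnW.
  by rewrite -[a 0]alt_walk_period -(prednK p0) m1_alt_walkS alt_set_m2walk // prednK.
rewrite -alt_walkS; case: (ltnP j.+1 p) => [|pj]; first exact: alt_set_walk.
have -> : j.+1 = p by apply/eqP; rewrite eqn_leq jp.
by rewrite alt_walk_period; apply: (@alt_set_walk _ 0).
Qed.

(* If the alternating cycle through y avoids {x, m1 x}, switch to
   m1 on it; otherwise stop at the first c = m2 (a i) in {x, m1 x} and use m1 on the path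
   from y to c together with the edge {y, c}.  Outside, keep m2. *)
Section Swap.
Variables (F : {set {set T}}) (x : T).
Local Notation X := [set x; m1 x].
Hypotheses (yX : y \notin X) (Fxy : [set x; y] \in F) (Fym1x : [set y; m1 x] \in F).
Hypotheses (m1F : {in V, forall v, v \notin X -> [set v; m1 v] \in F})
           (m2F : {in V, forall v, v \notin [set y; m2 y] -> [set v; m2 v] \in F}).

Let m1X v : (m1 v \in X) = (v \in X).
Proof. by rewrite !inE (can2_eq m1K m1K) (inj_eq (can_inj m1K)) orbC. Qed.

Lemma alt_walk_notin i : (forall j, j < i -> m2 (a j) \notin X) -> a i \notin X.
Proof. by case: i => [//|i] /(_ i (ltnSn i)); rewrite alt_walkS m1X. Qed.

Lemma matchable_outside_alt_set n : 0 < n -> matchable (V :\: alt_set n) F.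
Proof.
move=> n0; apply: (@matchable_pairs_off _ _ _ m2) => v /setDP[vV vK].
have m2vK : m2 v \notin alt_set n by apply: contra vK => /alt_set_m2; rewrite m2K.
split; rewrite ?m2K //.
- by rewrite inE m2vK (perfect_involution_in m2V).
- by case: m2V => _ ->.
apply: m2F => //; apply: contra vK; rewrite in_set2 => /orP[] /eqP ->.
  exact: alt_set_walk n0.
exact: alt_set_m2walk n0.
Qed.

Lemma swap_alt_cycle : (forall j, j < p -> m2 (a j) \notin X) -> matchable V F.
Proof.
move=> notX; have p0 : 0 < p := order_gt0 _ _.
apply: (matchable_split (alt_set_sub p)); last exact: matchable_outside_alt_set.
apply: (@matchable_pairs_off _ _ _ m1) => v vK.
have vV := subsetP (alt_set_sub p) v vK.
split; rewrite ?m1K ?alt_cycle_m1 //; first by case: m1V => _ ->.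
apply: m1F => //; case/alt_setP: vK => j jp [] ->; last exact: notX.
by apply: alt_walk_notin => k kj; apply/notX/(ltn_trans kj).
Qed.

Lemma alt_path_m1 i v :
  i < p -> m2 (a i) \in X -> (forall j, j < i -> m2 (a j) \notin X) ->
  v \in alt_set i.+1 -> v != y -> v != m2 (a i) ->
  [/\ m1 v \in alt_set i.+1, m1 v != y, m1 v != m2 (a i) & v \notin X].
Proof.
move=> ip cX before; case/alt_setP=> [[|j] ji []] -> vy vc.
- by move: vy; rewrite -[a 0]/y eqxx.
- have i0 : 0 < i by rewrite lt0n; apply: contraNneq vc => ->.
  rewrite -alt_walkS; split; last exact: before.
  + exact: alt_set_walk.
  + by apply: alt_walk_neq_start; rewrite /= (leq_ltn_trans i0 ip).
  + exact: alt_walk_neq.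
- rewrite m1_alt_walkS; split.
  + exact: alt_set_m2walk (ltnW ji).
  + by rewrite eq_sym; apply: (alt_walk_neq 0 j).
  + by apply: contraNneq (before j ji) => ->.
  + by apply: alt_walk_notin => k kj; apply/before/(leq_trans kj).
- have ji' : j.+1 < i.
    by rewrite ltn_neqAle -ltnS ji andbT; apply: contraNneq vc => ->.
  rewrite -alt_walkS; split; last exact: before.
  + exact: alt_set_walk.
  + by apply: alt_walk_neq_start; rewrite /= (leq_ltn_trans ji' ip).
  + exact: alt_walk_neq.
Qed.

Lemma swap_alt_path i :
  i < p -> m2 (a i) \in X -> (forall j, j < i -> m2 (a j) \notin X) -> matchable V F.
Proof.
move=> ip cX before; have yc : y != m2 (a i) by apply: contraNneq yX => ->.
have Fyc : [set y; m2 (a i)] \in F by case/set2P: cX => ->; rewrite // setUC.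
have KV := alt_set_sub i.+1.
pose m v := if v == y then m2 (a i) else if v == m2 (a i) then y else m1 v.
apply: (matchable_split KV); last exact: matchable_outside_alt_set.
apply: (@matchable_pairs_off _ _ _ m) => v vK; rewrite /m.
have cK : m2 (a i) \in alt_set i.+1 := alt_set_m2walk (ltnSn i).
have yK : y \in alt_set i.+1 := alt_set_walk (ltn0Sn i).
case: (eqVneq v y) => [->|vy]; first by rewrite eq_sym (negbTE yc) !eqxx.
case: (eqVneq v (m2 (a i))) => [->|vc]; first by rewrite !eqxx setUC.
have [m1vK m1vy m1vc vX] := alt_path_m1 ip cX before vK vy vc.
rewrite (negbTE m1vy) (negbTE m1vc) m1K; split=> //; last exact: m1F (subsetP KV v vK) vX.
by case: m1V => _ -> //; apply: (subsetP KV).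
Qed.

Lemma alternating_swap : matchable V F.
Proof.
case: (boolP [exists j : 'I_p, m2 (a j) \in X]) => [/existsP hit | /existsPn miss].
  have : exists i, (i < p) && (m2 (a i) \in X) by case: hit => j jX; exists j; rewrite ltn_ord.
  case/ex_minnP=> i /andP[ip iX] imin; apply: (swap_alt_path ip iX) => j ji.
  by apply/negP => jX; move: (imin j); rewrite jX (ltn_trans ji ip) leqNgt ji => /(_ isT).
by apply: swap_alt_cycle => j jp; apply: (miss (Ordinal jp)).
Qed.

End Swap.
End AlternatingWalk.

Section Saturation.
Variable T : finType.
Implicit Types (V : {set T}) (F : {set {set T}}) (m : T -> T).

Lemma matches_setU1 V F m u u' :
  matches V ([set u; u'] |: F) m ->
  {in V, forall v, v \notin [set u; m u] -> [set v; m v] \in F}.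
Proof.
case=> [[_ fpf mK] mF] v vV; rewrite in_set2 negb_or => /andP[vu vmu].
move: (mF v vV); rewrite in_setU1 => /orP[/eqP e|//]; exfalso.
have : v \in [set u; u'] by rewrite -e set21.
rewrite in_set2 (negbTE vu) /= => /eqP vu'.
have : m v \in [set u; u'] by rewrite -e set22.
rewrite in_set2 => /orP[/eqP mvu|/eqP mvu'].
  by move: vmu; rewrite -mvu mK eqxx.
by move: (fpf v vV); rewrite mvu' vu' eqxx.
Qed.

Lemma matches_setU1_unused V F m u u' :
  matches V ([set u; u'] |: F) m -> m u != u' -> matches V F m.
Proof.
move=> mV mu; case: (mV) => [[_ fpf mK] mF]; split=> [|v vV]; first exact: mV.1.
have [vum|] := boolP (v \in [set u; m u]); last exact: matches_setU1 mV v vV.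
have [uV e] : u \in V /\ [set v; m v] = [set u; m u].
  case/set2P: vum vV => -> // muV.
  by rewrite mK setUC; split=> //; rewrite -(mK u) (perfect_involution_in mV.1 muV).
move: (mF u uV); rewrite -e in_setU1 => /orP[/eqP euu'|//]; exfalso.
have : m u \in [set u; u'] by rewrite -euu' e set22.
rewrite in_set2 (negbTE mu) orbF; exact/negP/fpf.
Qed.

Lemma matchable_of_violation V F a b c w :
  b \in V -> b \notin [set a; c] -> [set a; b] \in F -> [set b; c] \in F ->
  matchable V ([set a; c] |: F) -> matchable V ([set b; w] |: F) -> matchable V F.
Proof.
move=> bV bac Fab Fbc [m1 h1] [m2 h2].
have [m1a|m1a] := eqVneq (m1 a) c; last by exists m1; apply: matches_setU1_unused h1 m1a.
apply: (alternating_swap h1.1 h2.1 bV (x := a)); rewrite ?m1a //.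
- by move: (matches_setU1 h1); rewrite m1a.
- exact: matches_setU1 h2.
Qed.

Definition nonedges V F := #|[set e : {set T} | [&& e \subset V, #|e| == 2 & e \notin F]]|.

Lemma nonedges_setU1 V F a c :
  a \in V -> c \in V -> a != c -> [set a; c] \notin F ->
  nonedges V ([set a; c] |: F) < nonedges V F.
Proof.
move=> aV cV ac acF; apply/proper_card/properP; split.
  by apply/subsetP => e; rewrite !inE negb_or => /and3P[-> -> /andP[_ ->]].
exists [set a; c]; rewrite !inE ?eqxx ?cards2 ?ac ?acF ?andbF //=.
by rewrite andbT; apply/subsetP => v /set2P[] ->.
Qed.

Definition universal V F : {set T} :=
  [set u in V | [forall w in V, (w != u) ==> ([set u; w] \in F)]].

(* Adjacency is transitive among non-universal vertices: they span disjoint cliques. *)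
Definition cluster_off_universal V F : bool :=
  [forall a in V :\: universal V F, forall b in V :\: universal V F,
   forall c in V :\: universal V F,
   [&& b \notin [set a; c], a != c, [set a; b] \in F & [set b; c] \in F] ==>
   ([set a; c] \in F)].

Lemma cluster_off_universal_partition V F :
  cluster_off_universal V F ->
  exists P, [/\ partition P (V :\: universal V F), {in P, forall C, clique F C} &
    {in V :\: universal V F &, forall a b, [set a; b] \in F -> pblock P a = pblock P b}].
Proof.
move=> clF; set D := V :\: universal V F.
pose R := [rel a b | (a == b) || ([set a; b] \in F)].
have Rtrans : {in D & &, forall a b c, R a b -> R b c -> R a c}.
  move=> a b c aD bD cD; case: (eqVneq a b) => [-> _ //|ab].
  case: (eqVneq b c) => [<- //|bc].
  case: (eqVneq a c) => [-> _ _|ac]; first by rewrite /= eqxx.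
  rewrite /= (negbTE ab) (negbTE bc) (negbTE ac) /= => Fab Fbc.
  move/forall_inP: clF => /(_ a aD)/forall_inP/(_ b bD)/forall_inP/(_ c cD).
  by rewrite in_set2 negb_or eq_sym ab bc ac Fab Fbc; apply.
have eqR : {in D & &, equivalence_rel R}.
  move=> a b c aD bD cD; split=> [|Rab]; first by rewrite /= eqxx.
  apply/idP/idP; last exact: Rtrans.
  by apply: Rtrans => //; rewrite /= eq_sym setUC.
have partP := equivalence_partitionP eqR; have pbR := pblock_equivalence_partition eqR.
case/and3P: (partP) => /eqP covP tP _.
exists (equivalence_partition R D); split=> // [C CP a b aC bC ab|a b aD bD abF].
  have CD : C \subset D by rewrite -covP; apply: bigcup_sup.
  have : b \in pblock (equivalence_partition R D) a by rewrite (def_pblock tP CP aC).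
  by rewrite pbR ?(subsetP CD) //= (negbTE ab).
by apply/esym/(same_pblock tP); rewrite pbR //= abF orbT.
Qed.

Lemma matchable_of_saturated V F :
  (forall F', F \subset F' -> cluster_off_universal V F' -> matchable V F') -> matchable V F.
Proof.
have [n] := ubnP (nonedges V F); elim: n F => // n IH F ltFn H.
have [/H //|] := boolP (cluster_off_universal V F); first exact.
rewrite negb_forall_in => /exists_inP[a /setDP[aV _]].
rewrite negb_forall_in => /exists_inP[b /setDP[bV bU]].
have [w wV /andP[wb bwF]] : exists2 w, w \in V & (w != b) && ([set b; w] \notin F).
  move: bU; rewrite inE bV negb_forall_in => /exists_inP[w wV].
  by rewrite negb_imply; exists w.
rewrite negb_forall_in => /exists_inP[c /setDP[cV _]].
rewrite negb_imply => /andP[/and4P[bac ac Fab Fbc] acF].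
have IHe u u' : u \in V -> u' \in V -> u != u' -> [set u; u'] \notin F ->
    matchable V ([set u; u'] |: F).
  move=> uV u'V uu' uu'F; apply: IH => [|F' /(subset_trans (subsetUr _ _))/H //].
  exact: leq_trans (nonedges_setU1 uV u'V uu' uu'F) _.
by apply: (matchable_of_violation bV bac Fab Fbc (w := w)); apply: IHe; rewrite // eq_sym.
Qed.
End Saturation.

Lemma setDUU (T : finType) (A B C D : {set T}) :
  [disjoint A & D] -> [disjoint B & C] -> (A :|: B) :\: (C :|: D) = (A :\: C) :|: (B :\: D).
Proof.
move=> AD BC; apply/setP => v; rewrite !inE.
case vA: (v \in A); case vB: (v \in B);
  by rewrite ?(disjointFr AD vA) ?(disjointFr BC vB) ?andbT ?andbF ?orbF.
Qed.

Section CliquePartition.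
Variables (T : finType) (F : {set {set T}}).

Lemma clique_setU (C W Y : {set T}) :
  clique F C -> {in W & Y, forall u v, u != v -> [set u; v] \in F} -> C :|: W \subset Y ->
  clique F (C :|: W).
Proof.
move=> cC WF /subsetP CWY v w vCW wCW vw.
have [vW|vC] := boolP (v \in W); first by apply: WF => //; apply: CWY.
have [wW|wC] := boolP (w \in W); first by rewrite setUC; apply: WF; rewrite // 1?eq_sym // CWY.
by move: vCW wCW; rewrite !inE (negbTE vC) (negbTE wC) !orbF => vC' wC'; apply: cC.
Qed.

(* Each odd clique is completed by its own universal vertex; the universal vertices left
   over form an even clique. *)
Lemma matchable_cliques_universal (P : {set {set T}}) (U : {set T}) :
  trivIset P -> {in P, forall C, clique F C} ->
  {in U & cover P :|: U, forall u v, u != v -> [set u; v] \in F} ->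
  [disjoint U & cover P] -> #|[set C in P | odd #|C|]| <= #|U| ->
  ~~ odd (#|cover P| + #|U|) -> matchable (cover P :|: U) F.
Proof.
have [n] := ubnP #|P|; elim: n P U => // n IH P U ltPn tP clP uF dUP oddP evPU.
have [P0|[C CP]] := set_0Vmem P.
  move: evPU; rewrite P0 /cover big_set0 set0U cards0 add0n => evU.
  by apply: matchable_clique evU => u v uU vU; apply: uF; rewrite // inE vU orbT.
have CcP : C \subset cover P := bigcup_sup C CP.
have covP' : cover (P :\ C) = cover P :\: C := coverD1 tP CP.
have [W WU cardW] : exists2 W : {set T}, W \subset U & #|W| = odd #|C|.
  have [oC|] := boolP (odd #|C|); last by exists set0; rewrite ?sub0set ?cards0.
  have [u uU] : exists u, u \in U.
    apply/set0Pn; rewrite -card_gt0; apply: leq_trans oddP.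
    by rewrite card_gt0; apply/set0Pn; exists C; rewrite inE CP.
  by exists [set u]; rewrite ?sub1set ?cards1.
have CU : [disjoint C & U] by rewrite disjoint_sym; apply: disjointWr dUP.
have CW : [disjoint C & W] by apply: disjointWr CU.
have CWP : C :|: W \subset cover P :|: U by apply: setUSS.
apply: (matchable_split CWP).
  apply: matchable_clique.
    by apply: clique_setU (clP C CP) _ CWP => u v /(subsetP WU); apply: uF.
  by rewrite cardsU (disjoint_setI0 CW) cards0 subn0 cardW oddD oddb addbb.
rewrite setDUU; last 2 first.
- by rewrite disjoint_sym; apply: disjointWl WU dUP.
- by rewrite disjoint_sym.
rewrite -covP'; apply: IH; first by move: ltPn; rewrite (cardsD1 C P) CP.
- exact: trivIsetS (subD1set _ _) tP.
- by move=> D /setD1P[_ /clP].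
- move=> u v /setDP[uU _] vPU; apply: uF => //.
  by move: vPU; rewrite covP' !inE => /orP[/andP[_ ->] //|/andP[_ ->]]; rewrite orbT.
- by apply: disjointWl (subsetDl _ _) _; apply: disjointWr dUP; rewrite covP' subsetDl.
- have -> : [set D in P :\ C | odd #|D|] = [set D in P | odd #|D|] :\ C.
    by apply/setP => D; rewrite !inE andbA.
  move: oddP; rewrite (cardsD1 C) inE CP /= cardsD (setIidPr WU) cardW; lia.
have cardP : #|cover P| = #|C| + #|cover (P :\ C)|.
  by rewrite covP' cardsD (setIidPr CcP) subnKC ?subset_leq_card.
rewrite cardsD (setIidPr WU) oddD oddB ?subset_leq_card // cardW oddb.
by move: evPU; rewrite cardP !oddD; case: (odd #|C|); case: odd; case: odd.
Qed.
End CliquePartition.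

Section Components.
Variable T : finType.
Implicit Types (A E : {set {set T}}) (S : {set T}).

Lemma adj_sym A : symmetric (adj A).
Proof. by move=> a b; rewrite /adj setUC. Qed.

Lemma card_imset_le_ncomp (Y : finType) A (h : T -> Y) :
  (forall a b, adj A a b -> h a = h b) -> #|[set h t | t in T]| <= ncomp A.
Proof.
move=> hA; have cA := sym_connect_sym (adj_sym A).
have hconn a b : connect (adj A) a b -> h a = h b.
  by case/connectP=> p + ->; elim: p a => //= c p IH a /andP[/hA -> /IH].
have -> : [set h t | t in T] = [set h r | r in roots (adj A)].
  apply/setP => y; apply/imsetP/imsetP => [[t _ ->]|[r _ ->]]; last by exists r.
  exists (fingraph.root (adj A) t); first by rewrite inE roots_root.
  exact: hconn (connect_root _ t).
apply: leq_trans (leq_imset_card _ _) (subset_leq_card _).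
by apply/subsetP => r; rewrite !inE andbT.
Qed.

Lemma ncomp_le_card A : ncomp A <= #|T|.
Proof. exact: max_card. Qed.

Lemma ncomp_lt_card A a b : [set a; b] \in A -> a != b -> ncomp A < #|T|.
Proof.
move=> abA ab; have cA := sym_connect_sym (adj_sym A).
have [x xr] : exists x, ~~ roots (adj A) x.
  have [ra|] := boolP (roots (adj A) a); last by exists a.
  have [rb|] := boolP (roots (adj A) b); last by exists b.
  have := connect1 (abA : adj A a b).
  by rewrite -(root_connect cA) (eqP ra) (eqP rb) (negbTE ab).
have T0 : 0 < #|T| by apply/card_gt0P; exists x.
have : n_comp (adj A) T <= #|[set~ x]|.
  by apply: subset_leq_card; apply/subsetP => r; rewrite !inE andbT; apply: contraTneq => ->.
by rewrite cardsC1 /ncomp; lia.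
Qed.

Lemma ncomp_connected E (t0 : T) : connected_graph E -> ncomp E = 1.
Proof.
move=> cE; have cs := sym_connect_sym (adj_sym E).
apply/eqP; rewrite /ncomp /n_comp_mem eqn_leq; apply/andP; split.
  rewrite -(cards1 (fingraph.root (adj E) t0)); apply: subset_leq_card; apply/subsetP => r.
  by rewrite !inE andbT => /eqP <-; rewrite (root_connect cs).
by apply/card_gt0P; exists (fingraph.root (adj E) t0); rewrite !inE roots_root.
Qed.
Definition inner_edges A (X : {set T}) := [set e in A | e \subset X].

Lemma card_partition_add_le_ncomp E S (P : {set {set T}}) :
  partition P (~: S) ->
  {in ~: S &, forall a b, [set a; b] \in E -> pblock P a = pblock P b} ->
  #|P| + #|S| <= ncomp (inner_edges E (~: S)).
Proof.
case/and3P=> /eqP covP tP P0 EP.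
pose h t := if t \in S then [set t] else pblock P t.
apply: leq_trans (card_imset_le_ncomp (h := h) _); last first.
  move=> a b; rewrite /adj inE => /andP[abE /subsetP abS].
  have aS := abS a (set21 a b); have bS := abS b (set22 a b).
  by rewrite /h; move: (aS) (bS); rewrite !inE => /negbTE -> /negbTE ->; apply: EP.
have disj : [disjoint P & [set [set t] | t in S]].
  rewrite -setI_eq0; apply/eqP/setP => C; rewrite !inE.
  apply/negP => /andP[CP /imsetP[t tS Ct]].
  have : t \in cover P by apply/bigcupP; exists C; rewrite // Ct set11.
  by rewrite covP inE tS.
rewrite -(card_imset S (@set1_inj T)) -cardsUI (disjoint_setI0 disj) cards0 addn0.
apply: subset_leq_card; apply/subsetP => C; rewrite inE => /orP[CP|/imsetP[t tS ->]].
  have [a aC] : exists a, a \in C by apply/set0Pn; apply: contraNneq P0 => <-.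
  have aS : a \in ~: S by rewrite -covP; apply/bigcupP; exists C.
  apply/imsetP; exists a => //; rewrite /h; move: aS; rewrite inE => /negbTE ->.
  by rewrite (def_pblock tP CP aC).
by apply/imsetP; exists t; rewrite // /h tS.
Qed.
Lemma card_sep_sum (I : finType) (B : {set I}) (p : pred I) :
  #|[set i in B | p i]| = \sum_(i in B) p i.
Proof.
rewrite -sum1_card big_mkcond [RHS]big_mkcond; apply: eq_bigr => i _.
by rewrite inE; case: (i \in B); case: (p i).
Qed.

Lemma sum_card_setI_incident A S :
  \sum_(e in A) #|e :&: S| = \sum_(t in S) #|[set e in A | t \in e]|.
Proof.
have -> : \sum_(e in A) #|e :&: S| = \sum_(e in A) \sum_(t in S) (t \in e).
  by apply: eq_bigr => e _; rewrite -card_sep_sum; apply: eq_card => t; rewrite !inE andbC.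
by rewrite exchange_big; apply: eq_bigr => t _; rewrite card_sep_sum.
Qed.
Lemma odd_card_partition (P : {set {set T}}) (D : {set T}) :
  partition P D -> odd #|D| = odd #|[set C in P | odd #|C|]|.
Proof.
move/card_partition => ->; rewrite card_sep_sum.
by elim/big_rec2: _ => // C n b _ IH; rewrite !oddD IH oddb.
Qed.
End Components.

Section RegularDense.
Variables (T : finType) (E : {set {set T}}) (k : nat).
Hypotheses (sE : simple_graph E) (cE : connected_graph E) (dE : forall v, deg E v = k)
           (uE : uniformly_dense E) (T1 : 1 < #|T|).

Lemma handshake : 2 * #|E| = k * #|T|.
Proof.
have := sum_card_setI_incident E [set: T].
under eq_bigr => e eE do rewrite setIT sE //.
under [in RHS]eq_bigr => t _ do rewrite -/(deg E t) dE.
by rewrite !sum_nat_const cardsT mulnC => ->; rewrite mulnC.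
Qed.

Lemma card_edges_meeting_le (X : {set {set T}}) (S : {set T}) :
  X \subset E -> {in X, forall e, e :&: S != set0} -> #|X| <= k * #|S|.
Proof.
move=> XE XS; apply: (@leq_trans (\sum_(e in X) #|e :&: S|)).
  by rewrite -sum1_card; apply: leq_sum => e /XS; rewrite card_gt0.
rewrite sum_card_setI_incident mulnC -sum_nat_const; apply: leq_sum => t _.
rewrite -(dE t); apply: subset_leq_card; apply/subsetP => e.
by rewrite !inE => /andP[/(subsetP XE) -> ->].
Qed.

Lemma regular_deg_gt0 : 0 < k.
Proof.
case/card_gt1P: T1 => x [y [_ _ xy]].
case/connectP: (cE x y) => [[|c p] /=]; first by move=> _ exy; rewrite exy eqxx in xy.
case/andP=> xc _ _; rewrite -(dE x) card_gt0; apply/set0Pn.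
by exists [set x; c]; rewrite inE set21 andbT.
Qed.

Lemma density_cross (A : {set {set T}}) a b :
  A \subset E -> [set a; b] \in A -> a != b ->
  #|A| * (#|T| - 1) <= #|E| * (#|T| - ncomp A).
Proof.
move=> AE abA ab; have [t0 _] := card_gt0P (ltnW T1).
have A0 : A != set0 by apply/set0Pn; exists [set a; b].
have rA : 0 < #|T| - ncomp A by rewrite subn_gt0 (ncomp_lt_card abA ab).
have := uE AE A0; rewrite /rho /grank (ncomp_connected t0 cE).
rewrite ler_pdivrMr ?ltr0n // mulrAC ler_pdivlMr ?ltr0n ?subn_gt0 //.
by rewrite -!natrM ler_nat.
Qed.

Lemma ncomp_inner_edges_le (S : {set T}) :
  ncomp (inner_edges E (~: S)) <= maxn 1 (2 * #|S|).
Proof.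
have [t0 _] := card_gt0P (ltnW T1).
have [->|S0] := eqVneq S set0.
  have -> : inner_edges E (~: set0) = E by apply/setP => e; rewrite !inE setC0 subsetT andbT.
  by rewrite (ncomp_connected t0 cE) leq_maxl.
set A := inner_edges E (~: S).
have k0 := regular_deg_gt0.
have s0 : 0 < #|S| by rewrite card_gt0.
have kn := handshake.
have AE : A \subset E by apply/subsetP => e; rewrite inE => /andP[].
have hEA : #|E| <= #|A| + k * #|S|.
  rewrite -(cardsID A E) (setIidPr AE) leq_add2l.
  apply: card_edges_meeting_le; first exact: subsetDl.
  move=> e /setDP[eE]; rewrite inE eE => /subsetPn[t te tS].
  by apply/set0Pn; exists t; rewrite inE te; rewrite inE negbK in tS.
have cA_le := ncomp_le_card A.
apply: leq_trans (leq_maxr _ _).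
have [A0|[e eA]] := set_0Vmem A.
  rewrite A0 cards0 add0n in hEA.
  have : k * #|T| <= k * (2 * #|S|) by nia.
  by rewrite leq_pmul2l // => /(leq_trans cA_le).
have /eqP/cards2P[x [y [xy exy]]] := sE (subsetP AE e eA).
rewrite exy in eA.
have cA_lt := ncomp_lt_card eA xy.
have dense := density_cross AE eA xy.
(* If c(A) > 2|S|, density gives |A|(n - 1) <= |E|(n - 2|S| - 1), and then
   |E| - |A| <= k|S| with 2|E| = kn yields kn|S| <= k(n - 1)|S|. *)
rewrite leqNgt; apply/negP => cA_gt.
nia.
Qed.

Lemma matchable_cluster (V : {set T}) (F : {set {set T}}) :
  #|~: V| <= 1 -> ~~ odd #|V| -> inner_edges E V \subset F ->
  cluster_off_universal V F -> matchable V F.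
Proof.
move=> V1 evV EF /cluster_off_universal_partition[P [partP clP FP]].
set U := universal V F in partP FP *; set D := V :\: U in partP FP *.
have UV : U \subset V by apply/subsetP => u; rewrite inE => /andP[].
have DV : D \subset V := subsetDl V U.
have cardD : #|D| = #|V| - #|U| by rewrite cardsD (setIidPr UV).
case/and3P: (partP) => /eqP covP tP _.
have EP : {in D &, forall a b, [set a; b] \in E -> pblock P a = pblock P b}.
  move=> a b aD bD abE; apply: FP => //; apply: (subsetP EF); rewrite inE abE.
  by apply/subsetP => v /set2P[] ->; apply: (subsetP DV).
have cardP : #|P| <= #|U| + 1.
  have := ncomp_inner_edges_le (~: D); have := @card_partition_add_le_ncomp _ E (~: D) P.
  rewrite setCK => /(_ partP EP) /leq_trans/[apply].
  have -> : #|~: D| = #|~: V| + #|U|.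
    have := cardsC D; have := cardsC V; have := subset_leq_card UV; rewrite cardD.
    by move: #|~: D| #|~: V| #|U| #|V| #|T| => *; lia.
  by move: V1; move: #|P| #|~: V| #|U| => *; lia.
have oddP : #|[set C in P | odd #|C|]| <= #|U|.
  have : odd #|[set C in P | odd #|C|]| = odd #|U|.
    by rewrite -(odd_card_partition partP) cardD oddB ?subset_leq_card // (negbTE evV).
  have : #|[set C in P | odd #|C|]| <= #|U| + 1.
    by apply: leq_trans cardP; apply/subset_leq_card/subsetP => C; rewrite inE => /andP[].
  rewrite addn1 leq_eqVlt ltnS => /orP[/eqP -> /=|//].
  by case: odd.
rewrite -(setID V U) (setIidPr UV) setUC -/D -covP.
apply: matchable_cliques_universal => //.
- move=> u v; rewrite inE => /andP[_ /forall_inP uF] vPU; rewrite eq_sym => vu.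
  apply: (implyP (uF v _)) vu.
  by move: vPU; rewrite inE covP => /orP[/(subsetP DV)|/(subsetP UV)].
- by rewrite covP disjoints_subset; apply/subsetP => u uU; rewrite in_setC in_setD uU.
- by rewrite covP cardD subnK ?subset_leq_card.
Qed.
End RegularDense.

Lemma matchable_of_dense (T : finType) (E : {set {set T}}) (V : {set T}) :
  simple_graph E -> connected_graph E -> regular E -> uniformly_dense E ->
  #|~: V| <= 1 -> ~~ odd #|V| -> matchable V (inner_edges E V).
Proof.
move=> sE cE [k dE] uE V1 evV.
have [->|[v vV]] := set_0Vmem V; first exact: matchable0.
have T1 : 1 < #|T|.
  have V0 : 0 < #|V| by apply/card_gt0P; exists v.
  have V_gt1 : 1 < #|V| by move: evV V0; case: #|V| => [|[]].
  exact: leq_trans V_gt1 (max_card V).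
apply: matchable_of_saturated => F EF clF.
exact: (matchable_cluster sE cE dE uE T1).
Qed.

Theorem corollary3p14 (T : finType) (E : {set {set T}}) :
  simple_graph E -> connected_graph E -> regular E -> uniformly_dense E ->
  (exists M, perfect_matching [set: T] E M) \/
  (forall v : T, exists M, perfect_matching [set~ v] (del_vertex_edges E v) M).
Proof.
move=> sE cE rE uE; have pm := matchable_of_dense sE cE rE uE.
have [oddT|evenT] := boolP (odd #|T|); [right => v | left].
  have -> : del_vertex_edges E v = inner_edges E [set~ v].
    apply/setP => e; rewrite !inE; case: (e \in E) => //=.
    apply/idP/subsetP => [ve t te | sub]; first by rewrite !inE; apply: contraNneq ve => <-.
    by apply/negP => /sub; rewrite !inE eqxx.
  apply/matchable_perfect_matching/pm; first by rewrite setCK cards1.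
  by rewrite cardsC1; move: oddT; case: #|T|.
have -> : E = inner_edges E [set: T] by apply/setP => e; rewrite !inE subsetT andbT.
by apply/matchable_perfect_matching/pm; rewrite ?setCT ?cards0 ?cardsT.
Qed.
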